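(* The map $R$ is uniformly DC1-chaotic: there exist an uncountable set $S\subset[0,1]$ and a constant $\bar\delta>0$ such that for all $x\ne y$ in $S$ and every $\delta>0$, $$\limsup_{n\to\infty}\frac1n\#\{0\le k\le n-1:|R^k(x)-R^k(y)|<\delta\}=1,$$ $$\liminf_{n\to\infty}\frac1n\#\{0\le k\le n-1:|R^k(x)-R^k(y)|<\bar\delta\}=0.$$
   Context: Define $\rho$ on binary words: for $b=b_1b_2\dots$, $\rho(b)$ is obtained by deleting every digit $b_n=0$ and replacing every $b_n=1$ by $0$ if $n$ is odd and by $1$ if $n$ is even. For $x\in(0,1]$ let $\beta(x)$ be the unique binary expansion of $x$ with infinitely many $1$'s. Define $R:[0,1]\to[0,1]$ by $R(0)=2/3$ and, for $x\in(0,1]$, $R(x)=\sum_{n\ge1}c_n2^{-n}$ where $c=\rho(\beta(x))$. $\#$ denotes cardinality. *)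

From Stdlib Require Import Reals Lra Lia Arith List ClassicalEpsilon.
From Coquelicot Require Import Coquelicot.
Open Scope R_scope.

(* Binary digit sequences are b : nat -> bool indexed from 1 as in the paper
   (b n is the digit b_n, n >= 1); the unused entry b 0 is fixed to false. *)

Definition is_binexp (x : R) (b : nat -> bool) : Prop :=
  b 0%nat = false /\
  (forall N : nat, exists n : nat, (N <= n)%nat /\ b n = true) /\
  is_series (fun n : nat => if b n then (/2) ^ n else 0) x.

(* beta x : the (unique, for x in (0,1]) binary expansion of x with
   infinitely many 1's. *)
Definition beta (x : R) : nat -> bool :=
  epsilon (inhabits (fun _ : nat => false)) (is_binexp x).

Definition ones (b : nat -> bool) (n : nat) : nat :=
  length (filter b (seq 1 n)).

(* k-th digit (k >= 1) of rho(b): rho deletes the 0's and replaces the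
   digit b_n = 1 by 0 if n is odd and by 1 if n is even. *)
Definition rho_digit (b : nat -> bool) (k : nat) : Prop :=
  exists n : nat, Nat.Even n /\ b n = true /\ ones b n = k.

Definition Rmap (x : R) : R :=
  if Req_EM_T x 0 then 2 / 3
  else Series (fun k : nat =>
         if Nat.eq_dec k 0 then 0
         else if excluded_middle_informative (rho_digit (beta x) k)
              then (/2) ^ k else 0).

Definition close_count (x y d : R) (n : nat) : nat :=
  length (filter (fun k : nat =>
     if Rlt_dec (Rabs (Nat.iter k Rmap x - Nat.iter k Rmap y)) d then true else false)
     (seq 0 n)).

Definition close_freq (x y d : R) (n : nat) : R :=
  INR (close_count x y d n) / INR n.

Definition uncountable (S : R -> Prop) : Prop :=
  ~ exists f : R -> nat, forall x y, S x -> S y -> f x = f y -> x = y.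

From Stdlib Require Import Reals Lra Lia Arith List ClassicalEpsilon FunctionalExtensionality Classical.
From Coquelicot Require Import Coquelicot.
Open Scope R_scope.

(* Instead of analysing R directly we build orbits backwards.
   A schedule J assigns to every time k a number J k in {0, k+1}, never 0 at
   two consecutive times.  From J we define digit sequences [orbit_digits J k]:
   the k-th one is 2 J k zeros followed by a rho-preimage of the (k+1)-st, so
   R maps the point with expansion [orbit_digits J k] to the point with
   expansion [orbit_digits J (k+1)] and the orbit of that point is explicit.
   At time k the expansion starts with 0101... (J k = 0) or with 2k+2 zeros
   (J k = k+1), so two such orbits are 2^-(2k+2)-close when the types agree
   and at least 1/4 apart when they differ.  Time is cut into epochs
   [2^2^i, 2^2^(i+1)) in which the type alternates with a phase bit: 0 in even
   epochs, and in odd epochs a bit of a sequence u : nat -> bool, each bit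
   being read infinitely often.  The file develops in turn: values of binary
   sequences and uniqueness of expansions (so beta inverts them), the orbit
   digits, the close/far dichotomy, the epoch schedule attached to u, and
   frequency counts at epoch ends.  S = {x_u} is uncountable by Cantor's
   argument; even epochs give upper density 1 of close times, odd epochs where
   u, u' differ give lower density 0 of 1/4-close times. *)

Definition bin_term (b : nat -> bool) (n : nat) : R := if b n then (/2) ^ n else 0.
Definition bin_val (b : nat -> bool) : R := Series (bin_term b).

Lemma half_pow_pos n : 0 < (/2) ^ n.
Proof. apply pow_lt; lra. Qed.

Lemma bin_term_bounds b n : 0 <= bin_term b n <= (/2) ^ n.
Proof. unfold bin_term. pose proof (half_pow_pos n). destruct (b n); lra. Qed.

Lemma geometric_half : is_series (fun n => (/2) ^ n) 2.
Proof.
  assert (Hgeom : is_series (fun n => (/2) ^ n) (/ (1 - /2))).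
  { apply is_series_geom. rewrite Rabs_pos_eq; lra. }
  replace (/ (1 - /2)) with 2 in Hgeom by field. exact Hgeom.
Qed.

Lemma ex_series_half_dominated (a : nat -> R) :
  (forall n, 0 <= a n <= (/2) ^ n) -> ex_series a.
Proof.
  intros Ha. apply (ex_series_le a (fun n => (/2) ^ n)).
  - intros n. specialize (Ha n). change (Rabs (a n) <= (/2) ^ n).
    rewrite Rabs_pos_eq; lra.
  - eexists; apply geometric_half.
Qed.

Lemma bin_term_ex b : ex_series (bin_term b).
Proof. apply ex_series_half_dominated, bin_term_bounds. Qed.

Lemma partial_sum_le_Series (a : nat -> R) N :
  (forall n, 0 <= a n) -> ex_series a -> sum_f_R0 a N <= Series a.
Proof.
  intros Hpos Hex. apply sum_incr; [|exact Hpos].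
  apply is_series_Reals, Series_correct, Hex.
Qed.

Lemma term_le_partial_sum (a : nat -> R) N :
  (forall n, 0 <= a n) -> a N <= sum_f_R0 a N.
Proof.
  intros Hpos. destruct N as [|N]; simpl; [lra|].
  pose proof (cond_pos_sum a N Hpos). lra.
Qed.

Definition bin_tail (b : nat -> bool) (N : nat) : R :=
  Series (fun k => bin_term b (S N + k)).

Lemma bin_val_split b N : bin_val b = sum_f_R0 (bin_term b) N + bin_tail b N.
Proof.
  unfold bin_val, bin_tail.
  rewrite (Series_incr_n (bin_term b) (S N)); [reflexivity|lia|apply bin_term_ex].
Qed.

Lemma bin_tail_ex b N : ex_series (fun k => bin_term b (S N + k)).
Proof.
  apply ex_series_half_dominated. intros n.
  pose proof (bin_term_bounds b (S N + n)) as [Hlo Hhi]. rewrite pow_add in Hhi.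
  assert (0 <= (/2) ^ S N < 1) by (apply pow_lt_1_compat; [lra|lia]).
  pose proof (half_pow_pos n). nra.
Qed.

Lemma bin_tail_ge_term b N i : bin_term b (S N + i) <= bin_tail b N.
Proof.
  eapply Rle_trans; [|apply partial_sum_le_Series with (N := i)].
  - apply (term_le_partial_sum (fun k => bin_term b (S N + k))).
    intros n; apply bin_term_bounds.
  - intros n; apply bin_term_bounds.
  - apply bin_tail_ex.
Qed.

Lemma bin_tail_nonneg b N : 0 <= bin_tail b N.
Proof.
  eapply Rle_trans; [|apply (bin_tail_ge_term b N 0)]. apply bin_term_bounds.
Qed.

Lemma bin_tail_le b N : bin_tail b N <= (/2) ^ N.
Proof.
  assert (Hgeom : Series (fun k => (/2) ^ S N * (/2) ^ k) = (/2) ^ N).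
  { rewrite Series_scal_l. change (pow (/2)) with (fun n => (/2) ^ n).
    rewrite (is_series_unique _ _ geometric_half). simpl. field. }
  rewrite <- Hgeom. apply Series_le.
  - intros n. rewrite <- pow_add. apply bin_term_bounds.
  - apply (ex_series_scal_l ((/2) ^ S N) (fun k => (/2) ^ k)).
    eexists; apply geometric_half.
Qed.

Lemma bin_val_agree b b' N : (forall n, (n <= N)%nat -> b n = b' n) ->
  Rabs (bin_val b - bin_val b') <= (/2) ^ N.
Proof.
  intros Hagree. rewrite (bin_val_split b N), (bin_val_split b' N).
  rewrite (sum_eq (bin_term b) (bin_term b') N).
  2:{ intros i Hi. unfold bin_term. rewrite Hagree by exact Hi. reflexivity. }
  pose proof (bin_tail_nonneg b N). pose proof (bin_tail_nonneg b' N).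
  pose proof (bin_tail_le b N). pose proof (bin_tail_le b' N).
  apply Rabs_le. lra.
Qed.

Lemma bin_val_ge_term b N : bin_term b N <= bin_val b.
Proof.
  rewrite (bin_val_split b N). pose proof (bin_tail_nonneg b N).
  pose proof (term_le_partial_sum (bin_term b) N (fun n => proj1 (bin_term_bounds b n))).
  lra.
Qed.

Lemma bin_val_unit b : b 0%nat = false -> 0 <= bin_val b <= 1.
Proof.
  intros Hb0. split.
  - eapply Rle_trans; [|apply (bin_val_ge_term b 0)]. apply bin_term_bounds.
  - rewrite (bin_val_split b 0). simpl. unfold bin_term at 1. rewrite Hb0.
    pose proof (bin_tail_le b 0). simpl in *. lra.
Qed.

Definition infinitely_many_ones (b : nat -> bool) : Prop :=
  forall N, exists n, (N <= n)%nat /\ b n = true.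

Lemma bin_val_pos b : infinitely_many_ones b -> 0 < bin_val b.
Proof.
  intros Hinf. destruct (Hinf 0%nat) as [n [_ Hn]].
  eapply Rlt_le_trans; [|apply (bin_val_ge_term b n)].
  unfold bin_term. rewrite Hn. apply half_pow_pos.
Qed.

(* If b has infinitely many ones, then b_{n+1} = 1 > 0 = b'_{n+1} after a common
   prefix forces val b > val b': the tail of b' is at most 2^-(n+1). *)
Lemma first_difference_lt b b' n : infinitely_many_ones b ->
  (forall m, (m <= n)%nat -> b m = b' m) -> b (S n) = true -> b' (S n) = false ->
  bin_val b' < bin_val b.
Proof.
  intros Hinf Hagree Hb Hb'.
  rewrite (bin_val_split b (S n)), (bin_val_split b' (S n)). simpl.
  rewrite (sum_eq (bin_term b) (bin_term b') n).
  2:{ intros i Hi. unfold bin_term. rewrite Hagree by lia. reflexivity. }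
  unfold bin_term at 2 4. rewrite Hb, Hb'.
  destruct (Hinf (S (S n))) as [m [Hm Hbm]].
  pose proof (bin_tail_ge_term b (S n) (m - S (S n))) as Htail.
  replace (S (S n) + (m - S (S n)))%nat with m in Htail by lia.
  unfold bin_term at 1 in Htail. rewrite Hbm in Htail.
  pose proof (half_pow_pos m). pose proof (bin_tail_le b' (S n)). simpl in *. lra.
Qed.

Lemma binexp_unique x b b' : is_binexp x b -> is_binexp x b' -> b = b'.
Proof.
  intros [Hb0 [Hinf Hx]] [Hb0' [Hinf' Hx']].
  assert (Hval : bin_val b = bin_val b').
  { change (is_series (bin_term b) x) in Hx. change (is_series (bin_term b') x) in Hx'.
    unfold bin_val. now rewrite (is_series_unique _ _ Hx), (is_series_unique _ _ Hx'). }
  apply functional_extensionality. intros n.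
  induction n as [n IH] using (well_founded_induction lt_wf).
  destruct n as [|n]; [congruence|].
  destruct (b (S n)) eqn:Eb, (b' (S n)) eqn:Eb'; try reflexivity; exfalso.
  - pose proof (first_difference_lt b b' n Hinf (fun m Hm => IH m ltac:(lia)) Eb Eb').
    lra.
  - pose proof (first_difference_lt b' b n Hinf' (fun m Hm => eq_sym (IH m ltac:(lia))) Eb' Eb).
    lra.
Qed.

Lemma beta_bin_val b : b 0%nat = false -> infinitely_many_ones b -> beta (bin_val b) = b.
Proof.
  intros Hb0 Hinf.
  assert (Hb : is_binexp (bin_val b) b).
  { split; [exact Hb0|split; [exact Hinf|apply Series_correct, bin_term_ex]]. }
  apply (binexp_unique (bin_val b)); [|exact Hb].
  unfold beta. apply epsilon_spec. exists b. exact Hb.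
Qed.

(* A schedule J : nat -> nat prescribes 2 J k leading zeros at time k; it is
   admissible when J never vanishes at two consecutive times. *)
Definition no_consecutive_zeros (J : nat -> nat) : Prop :=
  forall k, J k = 0%nat -> J (S k) <> 0%nat.

Section OrbitDigits.
Variable J : nat -> nat.
Hypothesis HJ : no_consecutive_zeros J.

(* Digit n of the expansion at time k: 0 in the padding n <= 2 J k; after it,
   digit pairs (odd, even) encode the next expansion's digit i+1 as (not d, d),
   so every pair contains exactly one 1 and that 1 sits at the even position
   iff d = 1, i.e. rho undoes the encoding.  The recursion runs forward in
   time, so it is defined with fuel and shown independent of it below. *)
Fixpoint digits_fuel (fuel k n : nat) : bool :=
  match fuel with
  | O => false
  | S fuel' =>
    if (n <=? 2 * J k)%nat then false
    else if Nat.odd (n - 2 * J k)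
         then negb (digits_fuel fuel' (S k) (Nat.div2 (S (n - 2 * J k))))
         else digits_fuel fuel' (S k) (Nat.div2 (S (n - 2 * J k)))
  end.

(* The quantity decreasing along the recursion: the position roughly halves,
   and when it does not (J k = 0, n = 1) the next step stops in the padding. *)
Definition recursion_measure (k n : nat) : nat :=
  (2 * n + (if Nat.eq_dec (J k) 0 then 1 else 0))%nat.

Lemma recursion_measure_decreases k n : (2 * J k < n)%nat ->
  (recursion_measure (S k) (Nat.div2 (S (n - 2 * J k))) < recursion_measure k n)%nat.
Proof.
  intros Hn. unfold recursion_measure.
  pose proof (Nat.div2_odd (S (n - 2 * J k))) as Hdiv.
  revert Hdiv. generalize (Nat.div2 (S (n - 2 * J k))). intros m Hdiv.
  pose proof (HJ k).
  destruct (Nat.odd _), (Nat.eq_dec (J k) 0), (Nat.eq_dec (J (S k)) 0); simpl in Hdiv; lia.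
Qed.

Lemma digits_fuel_stable : forall fuel fuel' k n,
  (recursion_measure k n < fuel)%nat -> (fuel <= fuel')%nat ->
  digits_fuel fuel k n = digits_fuel fuel' k n.
Proof.
  induction fuel as [|fuel IH]; intros fuel' k n Hlt Hle; [lia|].
  destruct fuel' as [|fuel']; [lia|]. cbn [digits_fuel].
  destruct (n <=? 2 * J k)%nat eqn:Hpad; [reflexivity|].
  apply Nat.leb_gt in Hpad. pose proof (recursion_measure_decreases k n Hpad).
  rewrite (IH fuel') by lia. reflexivity.
Qed.

Definition orbit_digits (k n : nat) : bool := digits_fuel (2 * n + 2) k n.

Lemma orbit_digits_eq k n : orbit_digits k n =
  if (n <=? 2 * J k)%nat then false
  else if Nat.odd (n - 2 * J k)
       then negb (orbit_digits (S k) (Nat.div2 (S (n - 2 * J k))))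
       else orbit_digits (S k) (Nat.div2 (S (n - 2 * J k))).
Proof.
  unfold orbit_digits at 1. replace (2 * n + 2)%nat with (S (2 * n + 1)) by lia. cbn [digits_fuel].
  destruct (n <=? 2 * J k)%nat eqn:Hpad; [reflexivity|].
  apply Nat.leb_gt in Hpad. pose proof (recursion_measure_decreases k n Hpad).
  set (m := Nat.div2 (S (n - 2 * J k))) in *.
  assert (Hfuel : digits_fuel (2 * n + 1) (S k) m = orbit_digits (S k) m).
  { assert (recursion_measure k n <= 2 * n + 1)%nat
      by (unfold recursion_measure; destruct Nat.eq_dec; lia).
    assert (recursion_measure (S k) m < 2 * m + 2)%nat
      by (unfold recursion_measure; destruct Nat.eq_dec; lia).
    unfold orbit_digits. destruct (Nat.le_ge_cases (2 * n + 1) (2 * m + 2)).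
    - apply digits_fuel_stable; lia.
    - symmetry; apply digits_fuel_stable; lia. }
  now rewrite Hfuel.
Qed.

Lemma orbit_digits_padding k n : (n <= 2 * J k)%nat -> orbit_digits k n = false.
Proof. intros Hn. rewrite orbit_digits_eq. apply Nat.leb_le in Hn. now rewrite Hn. Qed.

Lemma orbit_digits_0 k : orbit_digits k 0 = false.
Proof. apply orbit_digits_padding. lia. Qed.

Lemma orbit_digits_odd k i :
  orbit_digits k (2 * J k + 2 * i + 1) = negb (orbit_digits (S k) (S i)).
Proof.
  rewrite orbit_digits_eq. destruct (_ <=? _)%nat eqn:Hpad; [apply Nat.leb_le in Hpad; lia|].
  replace (2 * J k + 2 * i + 1 - 2 * J k)%nat with (S (2 * i)) by lia.
  replace (S (S (2 * i))) with (2 * S i)%nat by lia.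
  now rewrite Nat.div2_double, Nat.odd_succ, Nat.even_mul.
Qed.

Lemma orbit_digits_even k i :
  orbit_digits k (2 * J k + 2 * i + 2) = orbit_digits (S k) (S i).
Proof.
  rewrite orbit_digits_eq. destruct (_ <=? _)%nat eqn:Hpad; [apply Nat.leb_le in Hpad; lia|].
  replace (2 * J k + 2 * i + 2 - 2 * J k)%nat with (2 * S i)%nat by lia.
  now rewrite Nat.div2_succ_double, Nat.odd_mul.
Qed.

Lemma ones_S b n : ones b (S n) = (ones b n + (if b (S n) then 1 else 0))%nat.
Proof.
  unfold ones. rewrite seq_S, filter_app, length_app. simpl.
  destruct (b (S n)); simpl; lia.
Qed.

Lemma ones_padding k n : (n <= 2 * J k)%nat -> ones (orbit_digits k) n = 0%nat.
Proof.
  induction n as [|n IH]; intros Hn; [reflexivity|].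
  rewrite ones_S, IH, orbit_digits_padding by lia. reflexivity.
Qed.

(* Each digit pair after the padding contributes exactly one 1. *)
Lemma ones_orbit_digits k i : ones (orbit_digits k) (2 * J k + 2 * i) = i.
Proof.
  induction i as [|i IH].
  - rewrite Nat.add_0_r. apply ones_padding. lia.
  - replace (2 * J k + 2 * S i)%nat with (S (S (2 * J k + 2 * i))) by lia.
    rewrite !ones_S, IH.
    replace (S (2 * J k + 2 * i)) with (2 * J k + 2 * i + 1)%nat by lia.
    replace (S (2 * J k + 2 * i + 1)) with (2 * J k + 2 * i + 2)%nat by lia.
    rewrite orbit_digits_odd, orbit_digits_even.
    destruct (orbit_digits (S k) (S i)); simpl; lia.
Qed.

Lemma rho_orbit_digits k m : (1 <= m)%nat ->
  (rho_digit (orbit_digits k) m <-> orbit_digits (S k) m = true).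
Proof.
  intros Hm. split.
  - intros [n [[h Hh] [Hone Hcount]]].
    destruct (Nat.le_gt_cases n (2 * J k)) as [Hpad|Hpad].
    { now rewrite orbit_digits_padding in Hone. }
    replace n with (2 * J k + 2 * (h - J k - 1) + 2)%nat in * by lia.
    rewrite orbit_digits_even in Hone.
    replace (2 * J k + 2 * (h - J k - 1) + 2)%nat with (2 * J k + 2 * S (h - J k - 1))%nat
      in Hcount by lia.
    rewrite ones_orbit_digits in Hcount. now subst m.
  - intros Hone. destruct m as [|i]; [lia|].
    exists (2 * J k + 2 * i + 2)%nat. split; [|split].
    + exists (J k + i + 1)%nat. lia.
    + now rewrite orbit_digits_even.
    + replace (2 * J k + 2 * i + 2)%nat with (2 * J k + 2 * S i)%nat by lia.
      apply ones_orbit_digits.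
Qed.

Lemma orbit_digits_infinite k : infinitely_many_ones (orbit_digits k).
Proof.
  intros N. destruct (orbit_digits (S k) (S N)) eqn:Hd.
  - exists (2 * J k + 2 * N + 2)%nat. rewrite orbit_digits_even. split; [lia|exact Hd].
  - exists (2 * J k + 2 * N + 1)%nat. rewrite orbit_digits_odd, Hd. split; [lia|reflexivity].
Qed.

Lemma Rmap_orbit_digits k :
  Rmap (bin_val (orbit_digits k)) = bin_val (orbit_digits (S k)).
Proof.
  unfold Rmap. destruct (Req_EM_T _ 0) as [Hzero|_].
  { pose proof (bin_val_pos _ (orbit_digits_infinite k)). lra. }
  rewrite (beta_bin_val _ (orbit_digits_0 k) (orbit_digits_infinite k)).
  unfold bin_val. apply Series_ext. intros n. unfold bin_term.
  destruct (Nat.eq_dec n 0) as [->|Hn]; [now rewrite orbit_digits_0|].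
  destruct (excluded_middle_informative _) as [Hrho|Hrho].
  - apply (rho_orbit_digits k n) in Hrho; [|lia]. now rewrite Hrho.
  - destruct (orbit_digits (S k) n) eqn:Hd; [|reflexivity].
    exfalso. apply Hrho. apply (rho_orbit_digits k n); [lia|exact Hd].
Qed.

Lemma iter_Rmap_orbit k :
  Nat.iter k Rmap (bin_val (orbit_digits 0)) = bin_val (orbit_digits k).
Proof.
  induction k as [|k IH]; [reflexivity|]. simpl Nat.iter. rewrite IH. apply Rmap_orbit_digits.
Qed.

End OrbitDigits.

Definition two_type_schedule (J : nat -> nat) : Prop :=
  no_consecutive_zeros J /\ forall k, J k = 0%nat \/ J k = S k.

(* The first 2k+2 digits at time k are 0101...01 if unpadded and all 0 if
   padded; an unpadded time is followed by a padded one, whose padding covers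
   every encoded digit we look at. *)
Lemma orbit_digits_prefix J (HJ : two_type_schedule J) k n : (n <= 2 * k + 2)%nat ->
  orbit_digits J k n =
  if Nat.eq_dec (J k) 0 then (if Nat.eq_dec n 0 then false else Nat.odd n) else false.
Proof.
  destruct HJ as [Hnz Htypes]. intros Hn.
  destruct (Nat.eq_dec (J k) 0) as [Hk|Hk].
  2:{ apply (orbit_digits_padding J Hnz). destruct (Htypes k); lia. }
  destruct (Nat.eq_dec n 0) as [->|Hn0]; [apply (orbit_digits_0 J Hnz)|].
  assert (Hnext : J (S k) = S (S k))
    by (destruct (Htypes (S k)); [now exfalso; apply (Hnz k)|auto]).
  destruct (Nat.Even_or_Odd n) as [[i Hi]|[i Hi]]; subst n.
  - destruct i as [|i]; [lia|].
    replace (2 * S i)%nat with (2 * J k + 2 * i + 2)%nat by lia.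
    rewrite (orbit_digits_even J Hnz), (orbit_digits_padding J Hnz) by lia.
    replace (2 * J k + 2 * i + 2)%nat with (2 * S i)%nat by lia.
    now rewrite Nat.odd_mul.
  - replace (2 * i + 1)%nat with (2 * J k + 2 * i + 1)%nat by lia.
    rewrite (orbit_digits_odd J Hnz), (orbit_digits_padding J Hnz) by lia.
    replace (2 * J k + 2 * i + 1)%nat with (S (2 * i)) by lia.
    now rewrite Nat.odd_succ, Nat.even_mul.
Qed.

Lemma same_type_close J J' (HJ : two_type_schedule J) (HJ' : two_type_schedule J') k :
  (J k = 0%nat <-> J' k = 0%nat) ->
  Rabs (bin_val (orbit_digits J k) - bin_val (orbit_digits J' k)) <= (/2) ^ (2 * k + 2).
Proof.
  intros Hsame. apply bin_val_agree. intros n Hn.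
  rewrite (orbit_digits_prefix J HJ k n Hn), (orbit_digits_prefix J' HJ' k n Hn).
  destruct (Nat.eq_dec (J k) 0), (Nat.eq_dec (J' k) 0); tauto.
Qed.

(* Different types at time k: the unpadded point is >= 1/2, the padded one
   is <= 1/4. *)
Lemma different_type_far J J' (HJ : two_type_schedule J) (HJ' : two_type_schedule J') k :
  J k = 0%nat -> J' k <> 0%nat ->
  /4 <= Rabs (bin_val (orbit_digits J k) - bin_val (orbit_digits J' k)).
Proof.
  intros Hk Hk'.
  assert (Hbig : /2 <= bin_val (orbit_digits J k)).
  { eapply Rle_trans; [|apply (bin_val_ge_term _ 1)]. unfold bin_term.
    rewrite (orbit_digits_prefix J HJ k 1) by lia.
    destruct Nat.eq_dec; [simpl; lra|contradiction]. }
  assert (Hsmall : bin_val (orbit_digits J' k) <= /4).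
  { rewrite (bin_val_split _ 2). simpl. unfold bin_term.
    rewrite !(orbit_digits_prefix J' HJ' k) by lia.
    destruct Nat.eq_dec; [contradiction|].
    pose proof (bin_tail_le (orbit_digits J' k) 2). simpl in *. lra. }
  rewrite Rabs_pos_eq; lra.
Qed.

Definition epoch_start (i : nat) : nat := 2 ^ (2 ^ i).
Definition epoch (k : nat) : nat := Nat.log2 (Nat.log2 k).

Lemma epoch_start_S i : epoch_start (S i) = (epoch_start i * epoch_start i)%nat.
Proof. unfold epoch_start. rewrite Nat.pow_succ_r', <- Nat.pow_add_r. f_equal. lia. Qed.

Lemma epoch_start_gt i : (i < epoch_start i)%nat.
Proof.
  unfold epoch_start. pose proof (Nat.pow_gt_lin_r 2 i ltac:(lia)).
  pose proof (Nat.pow_gt_lin_r 2 (2 ^ i) ltac:(lia)). lia.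
Qed.

Lemma epoch_spec i k : (epoch_start i <= k < epoch_start (S i))%nat -> epoch k = i.
Proof.
  intros [Hlo Hhi]. unfold epoch, epoch_start in *.
  assert (Hk : (0 < k)%nat) by (pose proof (Nat.pow_nonzero 2 (2 ^ i)); lia).
  assert (Hlog_lo : (2 ^ i <= Nat.log2 k)%nat).
  { rewrite <- (Nat.log2_pow2 (2 ^ i)) by lia. now apply Nat.log2_le_mono. }
  assert (Hlog_hi : (Nat.log2 k < 2 ^ S i)%nat)
    by exact (proj1 (Nat.log2_lt_pow2 k (2 ^ S i) Hk) Hhi).
  apply Nat.log2_unique; lia.
Qed.

Definition sqrt_excess (m : nat) : nat := m - Nat.sqrt m * Nat.sqrt m.

Lemma sqrt_excess_often n M : exists m, (M <= m)%nat /\ sqrt_excess m = n.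
Proof.
  set (t := (M + n + 1)%nat). exists (t * t + n)%nat.
  assert (Hsqrt : Nat.sqrt (t * t + n) = t).
  { apply Nat.le_antisymm.
    - apply Nat.lt_succ_r, Nat.sqrt_lt_square. unfold t. nia.
    - apply Nat.sqrt_le_square. lia. }
  unfold sqrt_excess. rewrite Hsqrt. unfold t. nia.
Qed.

Definition phase (u : nat -> bool) (i : nat) : bool :=
  if Nat.even i then false else u (sqrt_excess (Nat.div2 i)).

Lemma phases_differ_often u u' : u <> u' ->
  forall M, exists i, (M <= i)%nat /\ phase u i <> phase u' i.
Proof.
  intros Hne M.
  assert (Hdiff : exists n, u n <> u' n).
  { apply NNPP. intros Hall. apply Hne. apply functional_extensionality. intros n.
    apply NNPP. intros Hn. apply Hall. now exists n. }
  destruct Hdiff as [n Hn]. destruct (sqrt_excess_often n M) as [m [Hm Hexc]].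
  exists (S (2 * m)). split; [lia|].
  unfold phase. rewrite Nat.even_succ, Nat.odd_mul, Nat.div2_succ_double, Hexc.
  exact Hn.
Qed.

(* Inside an epoch, time k is unpadded iff k + phase is odd; the formula below
   also keeps no two consecutive unpadded times across epoch boundaries. *)
Definition phased_even (u : nat -> bool) (k : nat) : bool :=
  Nat.even (k + if phase u (epoch k) then 1 else 0).
Definition unpadded (u : nat -> bool) (k : nat) : bool :=
  negb (phased_even u k) && phased_even u (S k).
Definition schedule (u : nat -> bool) (k : nat) : nat :=
  if unpadded u k then 0 else S k.

Lemma schedule_two_type u : two_type_schedule (schedule u).
Proof.
  unfold schedule. split; intros k.
  - destruct (unpadded u k) eqn:Hk; [|discriminate]. intros _.
    unfold unpadded in *. apply andb_prop in Hk as [_ Hk]. now rewrite Hk.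
  - destruct (unpadded u k); auto.
Qed.

Lemma schedule_zero u k : schedule u k = 0%nat <-> unpadded u k = true.
Proof. unfold schedule. destruct (unpadded u k); split; congruence. Qed.

Lemma unpadded_in_epoch u i k :
  (epoch_start i <= k)%nat -> (S k < epoch_start (S i))%nat ->
  unpadded u k = negb (Nat.even (k + if phase u i then 1 else 0)).
Proof.
  intros Hlo Hhi. unfold unpadded, phased_even.
  rewrite (epoch_spec i k), (epoch_spec i (S k)) by lia.
  rewrite Nat.add_succ_l, Nat.even_succ, <- Nat.negb_even.
  now destruct (Nat.even _).
Qed.

Definition point (u : nat -> bool) : R := bin_val (orbit_digits (schedule u) 0).

Lemma point_unit u : 0 <= point u <= 1.
Proof. apply bin_val_unit, orbit_digits_0, schedule_two_type. Qed.

Lemma iter_Rmap_point u k :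
  Nat.iter k Rmap (point u) = bin_val (orbit_digits (schedule u) k).
Proof. apply iter_Rmap_orbit, schedule_two_type. Qed.

Lemma far_in_epoch u u' i k : phase u i <> phase u' i ->
  (epoch_start i <= k)%nat -> (S k < epoch_start (S i))%nat ->
  /4 <= Rabs (Nat.iter k Rmap (point u) - Nat.iter k Rmap (point u')).
Proof.
  intros Hphase Hlo Hhi. rewrite !iter_Rmap_point.
  assert (Htype : unpadded u k <> unpadded u' k).
  { rewrite (unpadded_in_epoch u i k), (unpadded_in_epoch u' i k) by assumption.
    destruct (phase u i), (phase u' i); try congruence;
      rewrite Nat.add_0_r, Nat.add_1_r, Nat.even_succ, <- Nat.negb_even;
      now destruct (Nat.even k). }
  pose proof (schedule_two_type u). pose proof (schedule_two_type u').
  destruct (unpadded u k) eqn:Hk.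
  - apply different_type_far; auto.
    + now apply schedule_zero.
    + rewrite schedule_zero. congruence.
  - rewrite Rabs_minus_sym. apply different_type_far; auto.
    + apply schedule_zero. destruct (unpadded u' k); congruence.
    + rewrite schedule_zero. congruence.
Qed.

Lemma close_in_epoch u u' i k : phase u i = phase u' i ->
  (epoch_start i <= k)%nat -> (S k < epoch_start (S i))%nat ->
  Rabs (Nat.iter k Rmap (point u) - Nat.iter k Rmap (point u')) <= (/2) ^ (2 * k + 2).
Proof.
  intros Hphase Hlo Hhi. rewrite !iter_Rmap_point.
  apply same_type_close; try apply schedule_two_type.
  rewrite !schedule_zero, (unpadded_in_epoch u i k), (unpadded_in_epoch u' i k), Hphase
    by assumption.
  tauto.
Qed.

Definition count_upto (f : nat -> bool) (m : nat) : nat := length (filter f (seq 0 m)).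

Lemma count_upto_S f m :
  count_upto f (S m) = (count_upto f m + if f m then 1 else 0)%nat.
Proof.
  unfold count_upto. rewrite seq_S, filter_app, length_app. simpl.
  destruct (f m); simpl; lia.
Qed.

Lemma count_upto_le f m : (count_upto f m <= m)%nat.
Proof.
  unfold count_upto. pose proof (filter_length_le f (seq 0 m)). now rewrite length_seq in *.
Qed.

Lemma count_upto_false_after f a m : (forall k, (a <= k < m)%nat -> f k = false) ->
  (count_upto f m <= a)%nat.
Proof.
  induction m as [|m IH]; intros Hfalse; [apply Nat.le_0_l|].
  destruct (Nat.le_gt_cases a m).
  - rewrite count_upto_S, Hfalse by lia. pose proof (IH (fun k Hk => Hfalse k ltac:(lia))). lia.
  - pose proof (count_upto_le f (S m)). lia.
Qed.

Lemma count_upto_true_after f a m : (forall k, (a <= k < m)%nat -> f k = true) ->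
  (m <= count_upto f m + a)%nat.
Proof.
  induction m as [|m IH]; intros Htrue; [apply Nat.le_0_l|].
  rewrite count_upto_S. destruct (Nat.le_gt_cases a m).
  - rewrite Htrue by lia. pose proof (IH (fun k Hk => Htrue k ltac:(lia))). lia.
  - lia.
Qed.

Definition close_test (x y d : R) (k : nat) : bool :=
  if Rlt_dec (Rabs (Nat.iter k Rmap x - Nat.iter k Rmap y)) d then true else false.

Lemma close_count_upto x y d n : close_count x y d n = count_upto (close_test x y d) n.
Proof. reflexivity. Qed.

Lemma close_freq_unit x y d n : 0 <= close_freq x y d n <= 1.
Proof.
  unfold close_freq. destruct n as [|n].
  { unfold Rdiv. simpl. rewrite Rmult_0_l. lra. }
  pose proof (le_INR _ _ (count_upto_le (close_test x y d) (S n))) as Hle.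
  rewrite <- close_count_upto in Hle.
  pose proof (pos_INR (close_count x y d (S n))).
  pose proof (lt_0_INR (S n) ltac:(lia)) as Hpos.
  split; [apply Rdiv_le_0_compat; lra|].
  apply (Rdiv_le_1 _ _ Hpos). exact Hle.
Qed.

Lemma ratio_small (B c : R) : 1 <= B -> c <= B + 1 -> c / (B * B) <= 2 / B.
Proof.
  intros HB Hc. unfold Rdiv. rewrite Rinv_mult.
  assert (B * / B = 1) by (field; lra).
  assert (0 < / B) by (apply Rinv_0_lt_compat; lra).
  assert (/ B <= 1) by (rewrite <- Rinv_1; apply Rinv_le_contravar; lra).
  nra.
Qed.

Lemma ratio_large (B c : R) : 1 <= B -> B * B <= c + B + 1 -> 1 - 2 / B <= c / (B * B).
Proof.
  intros HB Hc. unfold Rdiv. rewrite Rinv_mult.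
  assert (B * / B = 1) by (field; lra).
  assert (0 < / B) by (apply Rinv_0_lt_compat; lra).
  assert (/ B <= 1) by (rewrite <- Rinv_1; apply Rinv_le_contravar; lra).
  nra.
Qed.

Lemma INR_epoch_start_ge1 i : 1 <= INR (epoch_start i).
Proof. apply (le_INR 1). pose proof (epoch_start_gt i). lia. Qed.

Lemma epoch_start_inv_small eps : 0 < eps ->
  exists M, forall i, (M <= i)%nat -> 2 / INR (epoch_start i) < eps.
Proof.
  intros Heps.
  destruct (pow_lt_1_zero (/2) ltac:(rewrite Rabs_pos_eq; lra) (eps / 2) ltac:(lra)) as [M HM].
  exists M. intros i Hi. specialize (HM (2 ^ i)%nat).
  rewrite Rabs_pos_eq, pow_inv in HM by (apply pow_le; lra).
  unfold epoch_start. rewrite pow_INR. replace (INR 2) with 2 by (simpl; lra).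
  pose proof (Nat.pow_gt_lin_r 2 i ltac:(lia)).
  specialize (HM ltac:(unfold ge; lia)).
  unfold Rdiv in *. lra.
Qed.

(* At the end of an epoch of different phases the 1/4-close times have
   density at most 2/2^2^i: they all lie before the epoch (or at its end). *)
Lemma freq_far_epoch u u' i : phase u i <> phase u' i ->
  close_freq (point u) (point u') (/4) (epoch_start (S i)) <= 2 / INR (epoch_start i).
Proof.
  intros Hphase.
  assert (Hcount : (close_count (point u) (point u') (/4) (epoch_start (S i))
                    <= epoch_start i + 1)%nat).
  { destruct (epoch_start (S i)) as [|m] eqn:Hend; [pose proof (epoch_start_gt (S i)); lia|].
    rewrite close_count_upto, count_upto_S.
    assert (count_upto (close_test (point u) (point u') (/4)) m <= epoch_start i)%nat.
    { apply count_upto_false_after. intros k Hk. unfold close_test.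
      destruct Rlt_dec as [Hlt|]; [|reflexivity].
      pose proof (far_in_epoch u u' i k Hphase ltac:(lia) ltac:(lia)). lra. }
    destruct (close_test _ _ _ m); lia. }
  apply le_INR in Hcount. rewrite plus_INR in Hcount.
  unfold close_freq. rewrite epoch_start_S, mult_INR in *.
  apply ratio_small; [apply INR_epoch_start_ge1|exact Hcount].
Qed.

Lemma freq_close_epoch u u' i d : phase u i = phase u' i ->
  (forall k, (epoch_start i <= k)%nat -> (/2) ^ (2 * k + 2) < d) ->
  1 - 2 / INR (epoch_start i) <= close_freq (point u) (point u') d (epoch_start (S i)).
Proof.
  intros Hphase Hsmall.
  assert (Hcount : (epoch_start (S i) <= close_count (point u) (point u') d (epoch_start (S i))
                                         + epoch_start i + 1)%nat).
  { destruct (epoch_start (S i)) as [|m] eqn:Hend; [pose proof (epoch_start_gt (S i)); lia|].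
    rewrite close_count_upto, count_upto_S.
    assert (m <= count_upto (close_test (point u) (point u') d) m + epoch_start i)%nat.
    { apply count_upto_true_after. intros k Hk. unfold close_test.
      destruct Rlt_dec as [|Hge]; [reflexivity|].
      pose proof (close_in_epoch u u' i k Hphase ltac:(lia) ltac:(lia)).
      specialize (Hsmall k ltac:(lia)). lra. }
    destruct (close_test _ _ _ m); lia. }
  apply le_INR in Hcount. rewrite !plus_INR in Hcount.
  unfold close_freq. rewrite epoch_start_S, mult_INR in *.
  apply ratio_large; [apply INR_epoch_start_ge1|exact Hcount].
Qed.

Lemma point_injective u u' : point u = point u' -> u = u'.
Proof.
  intros Heq. apply NNPP. intros Hne.
  destruct (phases_differ_often u u' Hne 1) as [i [Hi Hphase]].
  assert (Hroom : (S (epoch_start i) < epoch_start (S i))%nat).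
  { rewrite epoch_start_S. pose proof (epoch_start_gt i). nia. }
  pose proof (far_in_epoch u u' i (epoch_start i) Hphase (le_n _) Hroom) as Hfar.
  rewrite Heq, Rminus_diag, Rabs_R0 in Hfar. lra.
Qed.

(* Even epochs have equal phases for all points: upper density 1 at every scale. *)
Lemma limsup_close u u' d : 0 < d -> LimSup_seq (close_freq (point u) (point u') d) = 1.
Proof.
  intros Hd. apply is_LimSup_seq_unique. intros eps. split.
  - intros N.
    destruct (pow_lt_1_zero (/2) ltac:(rewrite Rabs_pos_eq; lra) d Hd) as [M1 HM1].
    destruct (epoch_start_inv_small eps (cond_pos eps)) as [M2 HM2].
    set (i := (2 * (N + M1 + M2))%nat).
    exists (epoch_start (S i)). split; [pose proof (epoch_start_gt (S i)); lia|].
    assert (Hphase : phase u i = phase u' i) by (unfold phase, i; now rewrite Nat.even_mul).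
    assert (Hsmall : forall k, (epoch_start i <= k)%nat -> (/2) ^ (2 * k + 2) < d).
    { intros k Hk. pose proof (epoch_start_gt i).
      specialize (HM1 (2 * k + 2)%nat ltac:(unfold i in *; lia)).
      now rewrite Rabs_pos_eq in HM1 by (apply pow_le; lra). }
    pose proof (freq_close_epoch u u' i d Hphase Hsmall).
    specialize (HM2 i ltac:(unfold i; lia)). simpl. lra.
  - exists 0%nat. intros n _. pose proof (close_freq_unit (point u) (point u') d n).
    pose proof (cond_pos eps). simpl. lra.
Qed.

(* Epochs of different phases recur: lower density 0 at scale 1/4. *)
Lemma liminf_far u u' : u <> u' -> LimInf_seq (close_freq (point u) (point u') (/4)) = 0.
Proof.
  intros Hne. apply is_LimInf_seq_unique. intros eps. split.
  - intros N. destruct (epoch_start_inv_small eps (cond_pos eps)) as [M HM].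
    destruct (phases_differ_often u u' Hne (N + M)) as [i [Hi Hphase]].
    exists (epoch_start (S i)). split; [pose proof (epoch_start_gt (S i)); lia|].
    pose proof (freq_far_epoch u u' i Hphase). specialize (HM i ltac:(lia)). simpl. lra.
  - exists 0%nat. intros n _. pose proof (close_freq_unit (point u) (point u') (/4) n).
    pose proof (cond_pos eps). simpl. lra.
Qed.

Lemma bool_sequences_uncountable (g : (nat -> bool) -> nat) :
  ~ (forall u v, g u = g v -> u = v).
Proof.
  intros Hinj.
  set (pick := fun n => epsilon (inhabits (fun _ : nat => false)) (fun u => g u = n)).
  set (diag := fun n => negb (pick n n)).
  assert (Hpick : g (pick (g diag)) = g diag).
  { unfold pick. apply epsilon_spec. now exists diag. }
  apply Hinj in Hpick.
  assert (Hself : diag (g diag) = negb (diag (g diag))) by (unfold diag at 1; now rewrite Hpick).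
  destruct (diag (g diag)); discriminate.
Qed.

Theorem proposition6p10 :
  exists (S : R -> Prop) (dbar : R),
    (forall x, S x -> 0 <= x <= 1) /\
    uncountable S /\
    0 < dbar /\
    forall x y, S x -> S y -> x <> y ->
      (forall delta, 0 < delta -> LimSup_seq (close_freq x y delta) = Finite 1) /\
      LimInf_seq (close_freq x y dbar) = Finite 0.
Proof.
  exists (fun x => exists u, x = point u), (/4). split; [|split; [|split]].
  - intros x [u ->]. apply point_unit.
  - intros [f Hf]. apply (bool_sequences_uncountable (fun u => f (point u))).
    intros u v Hfuv. apply point_injective, Hf; eauto.
  - lra.
  - intros x y [u ->] [u' ->] Hne. split.
    + intros d Hd. now apply limsup_close.
    + apply liminf_far. intros ->. now apply Hne.
Qed.
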